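(* Let $k>0$ and $\mu<0$ be constants, and let $m_1,m_2$ be locally Lipschitz functions on an interval $[0,\tau)$ with $m_1\le m_2$, $m_2(0)\ge 0$, satisfying for a.e. $t\in(0,\tau)$ \[ m_1'(t)\le \mu m_1(t)^2+k\,(m_2(t)-m_1(t)),\qquad m_2'(t)\le \mu m_2(t)^2+k\,(m_2(t)-m_1(t)). \] If $m_1(0)\le \frac{2k}{\mu}-m_2(0)$, then $m(t):=m_1(t)-\frac{k}{\mu}$ satisfies $m(0)<0$ and \[ m(t)\le \frac{m(0)}{1-m(0)\mu t} \] for all $t\in[0,\tau)$ with $t<\frac{1}{m(0)\mu}$; in particular $m(t)\to-\infty$ as $t\to\frac{1}{m(0)\mu}$ (so that $\tau\le \frac{1}{m(0)\mu}$ if $m_1$ stays finite on $[0,\tau)$).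
   Context: In the paper $m_1(t)=\inf_x u_x(t,x)$, $m_2(t)=\sup_x u_x(t,x)$ and $k=K(0)$; the lemma is stated here as a self-contained statement about the differential inequalities. *)

From Stdlib Require Import Reals.
Open Scope R_scope.

Definition null_set (N : R -> Prop) : Prop :=
  forall eps : R, 0 < eps ->
    exists a b : nat -> R,
      (forall n, a n <= b n) /\
      (forall x, N x -> exists n, a n < x < b n) /\
      (forall n, sum_f_R0 (fun i => b i - a i) n <= eps).

Definition loc_lipschitz_0 (f : R -> R) (tau : R) : Prop :=
  forall b, 0 <= b < tau ->
    exists L, 0 <= L /\
      forall x y, 0 <= x <= b -> 0 <= y <= b -> Rabs (f x - f y) <= L * Rabs (x - y).

From Stdlib Require Import Reals Lra Psatz Classical.
Open Scope R_scope.

(* Put r := k / mu < 0.  The sum g := m1 + m2 - 2 r satisfies g' <= 2 k g a.e., so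
   g e^(-2kt) is nonincreasing and g <= 0 persists.  Given that, m1' <= mu (m1 - r)^2 a.e.:
   m1 - r is nonincreasing, hence stays below m(0) < 0, and -1/(m1 - r) - mu t is
   nonincreasing, which integrates to the Riccati bound and forces blow-up at 1/(m(0) mu).
   Every monotonicity step uses one principle: a Lipschitz function whose upper right Dini
   derivative is <= 0 outside a null set is nonincreasing.  Cover the null set by intervals
   of total length del; subtracting L times the covered length below t (plus e t) yields a
   function that decreases locally to the right everywhere, and a sup argument concludes. *)

Definition lipschitz_on (f : R -> R) (a b : R) : Prop :=
  exists L, 0 <= L /\
    forall x y, a <= x <= b -> a <= y <= b -> Rabs (f x - f y) <= L * Rabs (x - y).

Definition right_dini_nonpos (f : R -> R) (t : R) : Prop :=
  forall e, 0 < e -> exists eta, 0 < eta /\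
    forall s, t < s < t + eta -> f s - f t <= e * (s - t).

Lemma lipschitz_on_of_loc (f : R -> R) (tau b : R) :
  loc_lipschitz_0 f tau -> 0 <= b < tau -> lipschitz_on f 0 b.
Proof. intros Hf Hb; exact (Hf b Hb). Qed.

Lemma lipschitz_on_sub (f : R -> R) (a b a' b' : R) :
  a <= a' -> b' <= b -> lipschitz_on f a b -> lipschitz_on f a' b'.
Proof.
  intros Ha Hb [L [HL Hf]]; exists L; split; [exact HL|].
  intros x y Hx Hy; apply Hf; lra.
Qed.

Lemma lipschitz_on_le (f : R -> R) (a b L : R) :
  (forall x y, a <= x <= b -> a <= y <= b -> Rabs (f x - f y) <= L * Rabs (x - y)) ->
  forall t s, a <= t <= s -> s <= b -> f s - f t <= L * (s - t).
Proof.
  intros Hf t s Hts Hs.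
  pose proof (Hf s t ltac:(lra) ltac:(lra)) as H.
  rewrite (Rabs_right (s - t)) in H by lra.
  pose proof (Rle_abs (f s - f t)); lra.
Qed.

Lemma lipschitz_on_bounded (f : R -> R) (a b : R) :
  lipschitz_on f a b -> exists B, 0 <= B /\ forall x, a <= x <= b -> Rabs (f x) <= B.
Proof.
  intros [L [HL Hf]].
  exists (Rabs (f a) + L * Rabs (b - a)); split.
  { pose proof (Rabs_pos (f a)); pose proof (Rabs_pos (b - a)); nra. }
  intros x Hx.
  pose proof (Hf x a Hx ltac:(lra)) as Hxa.
  rewrite (Rabs_right (x - a)) in Hxa by lra.
  rewrite (Rabs_right (b - a)) by lra.
  replace (f x) with (f a + (f x - f a)) by ring.
  pose proof (Rabs_triang (f a) (f x - f a)); nra.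
Qed.

Lemma lipschitz_on_const (c a b : R) : lipschitz_on (fun _ => c) a b.
Proof.
  exists 0; split; [lra|]; intros x y _ _.
  rewrite Rminus_diag, Rabs_R0; lra.
Qed.

Lemma lipschitz_on_plus (f g : R -> R) (a b : R) :
  lipschitz_on f a b -> lipschitz_on g a b -> lipschitz_on (fun x => f x + g x) a b.
Proof.
  intros [Lf [HLf Hf]] [Lg [HLg Hg]]; exists (Lf + Lg); split; [lra|].
  intros x y Hx Hy.
  replace (f x + g x - (f y + g y)) with ((f x - f y) + (g x - g y)) by ring.
  pose proof (Rabs_triang (f x - f y) (g x - g y)).
  pose proof (Hf x y Hx Hy); pose proof (Hg x y Hx Hy); lra.
Qed.

Lemma lipschitz_on_minus (f g : R -> R) (a b : R) :
  lipschitz_on f a b -> lipschitz_on g a b -> lipschitz_on (fun x => f x - g x) a b.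
Proof.
  intros [Lf [HLf Hf]] [Lg [HLg Hg]]; exists (Lf + Lg); split; [lra|].
  intros x y Hx Hy.
  replace (f x - g x - (f y - g y)) with ((f x - f y) + - (g x - g y)) by ring.
  pose proof (Rabs_triang (f x - f y) (- (g x - g y))) as Htri; rewrite Rabs_Ropp in Htri.
  pose proof (Hf x y Hx Hy); pose proof (Hg x y Hx Hy); lra.
Qed.

Lemma lipschitz_on_mult (f g : R -> R) (a b : R) :
  lipschitz_on f a b -> lipschitz_on g a b -> lipschitz_on (fun x => f x * g x) a b.
Proof.
  intros Hf Hg.
  destruct (lipschitz_on_bounded f a b Hf) as [Bf [HBf Bf_bound]].
  destruct (lipschitz_on_bounded g a b Hg) as [Bg [HBg Bg_bound]].
  destruct Hf as [Lf [HLf Hf]]; destruct Hg as [Lg [HLg Hg]].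
  exists (Bf * Lg + Bg * Lf); split; [nra|].
  intros x y Hx Hy.
  replace (f x * g x - f y * g y) with (f x * (g x - g y) + g y * (f x - f y)) by ring.
  eapply Rle_trans; [apply Rabs_triang|]. rewrite !Rabs_mult.
  pose proof (Bf_bound x Hx); pose proof (Bg_bound y Hy).
  pose proof (Hf x y Hx Hy); pose proof (Hg x y Hx Hy).
  pose proof (Rabs_pos (f x)); pose proof (Rabs_pos (g y)); pose proof (Rabs_pos (x - y)).
  pose proof (Rabs_pos (f x - f y)); pose proof (Rabs_pos (g x - g y)).
  nra.
Qed.

Lemma lipschitz_on_inv (f : R -> R) (a b c : R) :
  0 < c -> (forall x, a <= x <= b -> c <= f x) ->
  lipschitz_on f a b -> lipschitz_on (fun x => / f x) a b.
Proof.
  intros Hc Hfc [L [HL Hf]].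
  exists (L * / (c * c)); split; [assert (0 < / (c * c)) by (apply Rinv_0_lt_compat; nra); nra|].
  intros x y Hx Hy.
  pose proof (Hfc x Hx); pose proof (Hfc y Hy).
  replace (/ f x - / f y) with ((f y - f x) / (f x * f y)) by (field; lra).
  unfold Rdiv; rewrite Rabs_mult, Rabs_inv, (Rabs_right (f x * f y)), <- Rabs_Ropp by nra.
  replace (- (f y - f x)) with (f x - f y) by ring.
  pose proof (Hf x y Hx Hy).
  assert (/ (f x * f y) <= / (c * c)) by (apply Rinv_le_contravar; nra).
  pose proof (Rabs_pos (f x - f y)).
  assert (0 < / (f x * f y)) by (apply Rinv_0_lt_compat; nra).
  nra.
Qed.

Lemma lipschitz_on_of_derive_bound (f f' : R -> R) (a b M : R) :
  (forall x, a <= x <= b -> derivable_pt_lim f x (f' x)) ->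
  (forall x, a <= x <= b -> Rabs (f' x) <= M) -> lipschitz_on f a b.
Proof.
  intros Hd HM; exists (Rabs M); split; [apply Rabs_pos|].
  intros x y Hx Hy.
  assert (Hbetween : forall c, Rmin y x <= c <= Rmax y x -> a <= c <= b).
  { intros c Hc; pose proof (Rmin_glb y x a ltac:(lra) ltac:(lra));
      pose proof (Rmax_lub y x b ltac:(lra) ltac:(lra)); lra. }
  destruct (MVT_abs f f' y x (fun c Hc => Hd c (Hbetween c Hc))) as [c [Hc Hcb]].
  rewrite Hc. pose proof (HM c (Hbetween c Hcb)); pose proof (Rle_abs M).
  apply Rmult_le_compat_r; [apply Rabs_pos | lra].
Qed.

Lemma derivable_pt_lim_exp_scal (c x : R) :
  derivable_pt_lim (fun y => exp (c * y)) x (c * exp (c * x)).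
Proof.
  pose proof (derivable_pt_lim_scal id c x 1 (derivable_pt_lim_id x)) as Hlin.
  replace (c * exp (c * x)) with (exp (c * x) * (c * 1)) by ring.
  exact (derivable_pt_lim_comp (mult_real_fct c id) exp x _ _ Hlin (derivable_pt_lim_exp _)).
Qed.

Lemma lipschitz_on_exp_scal (c a b : R) :
  c <= 0 -> 0 <= a -> lipschitz_on (fun x => exp (c * x)) a b.
Proof.
  intros Hc Ha.
  apply (lipschitz_on_of_derive_bound _ (fun x => c * exp (c * x)) a b (Rabs c)).
  - intros x _; apply derivable_pt_lim_exp_scal.
  - intros x Hx. rewrite Rabs_mult, (Rabs_right (exp _)) by (left; apply exp_pos).
    assert (exp (c * x) <= 1).
    { rewrite <- exp_0. destruct (Req_dec (c * x) 0) as [-> | Hne]; [lra|].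
      left; apply exp_increasing; nra. }
    pose proof (Rabs_pos c); nra.
Qed.

Lemma right_dini_nonpos_of_derivable (f : R -> R) (t d : R) :
  derivable_pt_lim f t d -> d <= 0 -> right_dini_nonpos f t.
Proof.
  intros Hd Hd0 e He. destruct (Hd e He) as [delta Hdelta].
  exists delta; split; [apply cond_pos|]. intros s Hs.
  assert (Hh : s - t <> 0) by lra.
  assert (Hsmall : Rabs (s - t) < delta) by (rewrite Rabs_right; lra).
  pose proof (Hdelta (s - t) Hh Hsmall) as Hq.
  replace (t + (s - t)) with s in Hq by ring.
  apply Rabs_def2 in Hq; destruct Hq as [Hq _].
  set (q := (f s - f t) / (s - t)) in *.
  assert (f s - f t = q * (s - t)) by (unfold q; field; lra). nra.
Qed.

Section CoverMeasure.

Variables (al be : nat -> R).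
Hypothesis al_le_be : forall i, al i <= be i.

Definition cover_length_below (t : R) (i : nat) : R := Rmax 0 (Rmin (be i) t - al i).

Lemma cover_length_below_ge0 t i : 0 <= cover_length_below t i.
Proof. apply Rmax_l. Qed.

Lemma cover_length_below_le t i : cover_length_below t i <= be i - al i.
Proof.
  pose proof (al_le_be i).
  unfold cover_length_below, Rmax, Rmin; repeat destruct Rle_dec; lra.
Qed.

Lemma cover_length_below_mono t s i :
  t <= s -> cover_length_below t i <= cover_length_below s i.
Proof. intros; unfold cover_length_below, Rmax, Rmin; repeat destruct Rle_dec; lra. Qed.

Lemma cover_length_below_jump t s i :
  al i <= t -> t <= s -> s <= be i ->
  cover_length_below t i + (s - t) <= cover_length_below s i.
Proof. intros; unfold cover_length_below, Rmax, Rmin; repeat destruct Rle_dec; lra. Qed.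

Lemma sum_cover_length_mono_t t s n :
  t <= s -> sum_f_R0 (cover_length_below t) n <= sum_f_R0 (cover_length_below s) n.
Proof. intros Hts; apply sum_growing; intro i; now apply cover_length_below_mono. Qed.

Lemma sum_cover_length_mono_n t n m :
  (n <= m)%nat -> sum_f_R0 (cover_length_below t) n <= sum_f_R0 (cover_length_below t) m.
Proof.
  induction 1 as [|m _ IH]; [lra|].
  rewrite tech5; pose proof (cover_length_below_ge0 t (S m)); lra.
Qed.

Lemma sum_cover_length_jump t s i n :
  (i <= n)%nat -> al i <= t -> t <= s -> s <= be i ->
  sum_f_R0 (cover_length_below t) n + (s - t) <= sum_f_R0 (cover_length_below s) n.
Proof.
  intros Hin Ht Hts Hs. induction n as [|n IH].
  - replace i with 0%nat in * by lia; simpl; now apply cover_length_below_jump.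
  - rewrite !tech5. destruct (Nat.eq_dec i (S n)) as [-> | Hne].
    + pose proof (sum_cover_length_mono_t t s n Hts).
      pose proof (cover_length_below_jump t s (S n) Ht Hts Hs); lra.
    + pose proof (IH ltac:(lia)).
      pose proof (cover_length_below_mono t s (S n) Hts); lra.
Qed.

Lemma cover_measure (del : R) :
  (forall n, sum_f_R0 (fun i => be i - al i) n <= del) ->
  exists F : R -> R,
    (forall t, 0 <= F t <= del) /\
    (forall t s, t <= s -> F t <= F s) /\
    (forall i t s, al i <= t -> t <= s -> s <= be i -> F t + (s - t) <= F s).
Proof.
  intros Hdel.
  set (E t := fun x => exists n, x = sum_f_R0 (cover_length_below t) n).
  assert (E_le : forall t x, E t x -> x <= del).
  { intros t x [n ->]. eapply Rle_trans; [apply sum_growing, cover_length_below_le | apply Hdel]. }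
  assert (E_bound : forall t, bound (E t)) by (intro t; exists del; exact (E_le t)).
  assert (E_inhabited : forall t, exists x, E t x)
    by (intro t; exists (sum_f_R0 (cover_length_below t) 0); unfold E; now exists 0%nat).
  pose (F t := proj1_sig (completeness (E t) (E_bound t) (E_inhabited t))).
  assert (F_lub : forall t, is_lub (E t) (F t)) by (intro t; apply proj2_sig).
  clearbody F; exists F.
  assert (F_ge : forall t n, sum_f_R0 (cover_length_below t) n <= F t).
  { intros t n; apply (F_lub t); now exists n. }
  split; [|split].
  - intro t; split.
    + pose proof (F_ge t 0%nat) as H0; simpl in H0; pose proof (cover_length_below_ge0 t 0); lra.
    + apply (F_lub t); exact (E_le t).
  - intros t s Hts; apply (F_lub t); intros x [n ->].
    pose proof (sum_cover_length_mono_t t s n Hts); pose proof (F_ge s n); lra.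
  - intros i t s Ht Hts Hs.
    cut (F t <= F s - (s - t)); [lra|].
    apply (F_lub t); intros x [n ->].
    pose proof (sum_cover_length_mono_n t n (max n i) (Nat.le_max_l n i)).
    pose proof (sum_cover_length_jump t s i (max n i) (Nat.le_max_r n i) Ht Hts Hs).
    pose proof (F_ge s (max n i)); lra.
Qed.

End CoverMeasure.

Lemma nonincreasing_of_right_steps (h : R -> R) (a b K : R) :
  a <= b -> 0 <= K ->
  (forall s c, a <= s <= c -> c <= b -> h c - h s <= K * (c - s)) ->
  (forall t, a <= t < b -> exists eta, 0 < eta /\
     forall s, t < s < t + eta -> s <= b -> h s <= h t) ->
  h b <= h a.
Proof.
  intros Hab HK Hleft Hstep.
  set (S t := a <= t <= b /\ forall s, a <= s <= t -> h s <= h a).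
  assert (Sa : S a) by (split; [lra | intros s Hs; replace s with a by lra; lra]).
  destruct (completeness S) as [c [Hub Hlub]].
  { exists b; intros x [Hx _]; lra. }
  { now exists a. }
  assert (Hac : a <= c) by (apply Hub, Sa).
  assert (Hcb : c <= b) by (apply Hlub; intros x [Hx _]; lra).
  assert (below_c : forall s, a <= s < c -> h s <= h a).
  { intros s Hs.
    destruct (classic (exists t, S t /\ s <= t)) as [[t [[_ Ht] Hst]] | Hno].
    - apply Ht; lra.
    - enough (c <= s) by lra.
      apply Hlub; intros x Hx; destruct (Rle_lt_dec s x); [|lra].
      exfalso; apply Hno; now exists x. }
  assert (at_c : h c <= h a).
  { destruct (Req_dec c a) as [-> | Hca]; [lra|].
    apply Rle_plus_epsilon; intros eps Heps.
    set (s := Rmax a (c - eps / (K + 1))).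
    assert (a <= s) by apply Rmax_l.
    assert (c - eps / (K + 1) <= s) by apply Rmax_r.
    assert (0 < eps / (K + 1)) by (apply Rdiv_lt_0_compat; lra).
    assert (s < c) by (apply Rmax_lub_lt; lra).
    assert (eps / (K + 1) * (K + 1) = eps) by (field; lra).
    pose proof (below_c s ltac:(lra)); pose proof (Hleft s c ltac:(lra) Hcb); nra. }
  enough (c = b) by (subst; exact at_c).
  destruct (Req_dec c b) as [|Hcb']; [assumption|exfalso].
  destruct (Hstep c ltac:(lra)) as [eta [Heta Hc]].
  set (t := Rmin b (c + eta / 2)).
  assert (Htb : t <= b) by apply Rmin_l.
  assert (Hteta : t <= c + eta / 2) by apply Rmin_r.
  assert (Hct : c < t) by (apply Rmin_glb_lt; lra).
  assert (St : S t).
  { split; [lra|]; intros s Hs.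
    destruct (Rlt_le_dec c s).
    - pose proof (Hc s ltac:(lra) ltac:(lra)); lra.
    - destruct (Req_dec s c) as [-> | ]; [exact at_c | apply below_c; lra]. }
  pose proof (Hub t St); lra.
Qed.

Lemma nonincreasing_of_dini_closed (f : R -> R) (a b : R) (N : R -> Prop) :
  a <= b -> null_set N -> lipschitz_on f a b ->
  (forall t, a <= t < b -> ~ N t -> right_dini_nonpos f t) ->
  f b <= f a.
Proof.
  intros Hab HN [L [HL Hf]] Hdini.
  pose proof (lipschitz_on_le f a b L Hf) as Hup.
  apply Rle_plus_epsilon; intros eps Heps.
  set (e := eps / (2 * (b - a + 1))).
  assert (He : 0 < e) by (apply Rdiv_lt_0_compat; lra).
  assert (He_eq : e * (2 * (b - a + 1)) = eps) by (unfold e; field; lra).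
  set (del := eps / (2 * (L + 1))).
  assert (Hdel : 0 < del) by (apply Rdiv_lt_0_compat; lra).
  assert (Hdel_eq : del * (2 * (L + 1)) = eps) by (unfold del; field; lra).
  destruct (HN del Hdel) as [al [be [Hal [Hcov Hsum]]]].
  destruct (cover_measure al be Hal del Hsum) as [F [HF [F_mono F_jump]]].
  set (h x := f x - e * (x - a) - L * F x).
  enough (h b <= h a).
  { unfold h in *; pose proof (HF a); pose proof (HF b); nra. }
  apply (nonincreasing_of_right_steps h a b L Hab HL).
  - intros s c Hsc Hc; unfold h.
    pose proof (Hup s c Hsc Hc); pose proof (F_mono s c ltac:(lra)); nra.
  - intros t Ht; destruct (classic (N t)) as [HNt | HNt].
    + (* inside the cover, F grows at least as fast as [f] can *)
      destruct (Hcov t HNt) as [n Hn].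
      exists (be n - t); split; [lra|]; intros s Hs Hsb; unfold h.
      pose proof (Hup t s ltac:(lra) Hsb).
      pose proof (F_jump n t s ltac:(lra) ltac:(lra) ltac:(lra)); nra.
    + destruct (Hdini t Ht HNt e He) as [eta [Heta Hloc]].
      exists eta; split; [exact Heta|]; intros s Hs Hsb; unfold h.
      pose proof (Hloc s Hs); pose proof (F_mono t s ltac:(lra)); nra.
Qed.

Lemma nonincreasing_of_dini (f : R -> R) (a b : R) (N : R -> Prop) :
  a <= b -> null_set N -> lipschitz_on f a b ->
  (forall t, a < t < b -> ~ N t -> right_dini_nonpos f t) ->
  f b <= f a.
Proof.
  intros Hab HN Hf Hdini.
  destruct (Req_dec a b) as [-> | Hne]; [lra|].
  destruct Hf as [L [HL Hlip]].
  apply Rle_plus_epsilon; intros eps Heps.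
  set (w := Rmin (b - a) (eps / (L + 1))).
  assert (Hw : 0 < w) by (apply Rmin_pos; [lra | apply Rdiv_lt_0_compat; lra]).
  assert (w <= b - a) by apply Rmin_l.
  assert (w <= eps / (L + 1)) by apply Rmin_r.
  assert (eps / (L + 1) * (L + 1) = eps) by (field; lra).
  assert (f b <= f (a + w)).
  { apply (nonincreasing_of_dini_closed f (a + w) b N); [lra | exact HN | |].
    - apply (lipschitz_on_sub f a b); [lra | lra | now exists L].
    - intros t Ht; apply Hdini; lra. }
  pose proof (lipschitz_on_le f a b L Hlip a (a + w) ltac:(lra) ltac:(lra)); nra.
Qed.

Lemma riccati_sum_deriv_le (mu r x y d1 d2 : R) :
  mu < 0 ->
  d1 <= mu * x ^ 2 + r * mu * (y - x) ->
  d2 <= mu * y ^ 2 + r * mu * (y - x) ->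
  d1 + d2 <= 2 * (r * mu) * (x + y - 2 * r).
Proof.
  intros Hmu H1 H2.
  (* the gap is [- mu ((x - 2 r)^2 + y^2) >= 0] *)
  pose proof (pow2_ge_0 (x - 2 * r)); pose proof (pow2_ge_0 y); nra.
Qed.

Lemma riccati_shift_deriv_le (mu r x y d : R) :
  mu < 0 -> 0 < r * mu -> x + y <= 2 * r ->
  d <= mu * x ^ 2 + r * mu * (y - x) -> d <= mu * (x - r) ^ 2.
Proof.
  intros Hmu Hk Hxy Hd.
  assert (r * mu * (y - x) <= r * mu * (2 * r - 2 * x)) by (apply Rmult_le_compat_l; lra).
  pose proof (pow2_ge_0 r); nra.
Qed.

Lemma riccati_profile_unbounded (m0 a M : R) :
  m0 < 0 -> 0 < a ->
  exists delta, 0 < delta /\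
    forall t, 1 / a - delta < t < 1 / a -> m0 / (1 - a * t) < M.
Proof.
  intros Hm0 Ha.
  set (A := Rabs M + 1).
  assert (HA : 0 < A) by (pose proof (Rabs_pos M); unfold A; lra).
  exists (- m0 / (a * A)); split; [apply Rdiv_lt_0_compat; nra|].
  intros t Ht.
  assert (Hat : a * t < 1) by (replace 1 with (a * (1 / a)) by (field; lra); nra).
  assert (Hgap : 1 - a * t < - m0 / A).
  { replace (- m0 / A) with (a * (- m0 / (a * A))) by (field; lra).
    replace 1 with (a * (1 / a)) at 1 by (field; lra); nra. }
  assert (HAgap : A * (1 - a * t) < - m0).
  { replace (- m0) with (A * (- m0 / A)) by (field; lra); apply Rmult_lt_compat_l; lra. }
  assert (Hq : m0 / (1 - a * t) * (1 - a * t) = m0) by (field; lra).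
  assert (m0 / (1 - a * t) < - A) by nra.
  pose proof (Rle_abs (- M)); rewrite Rabs_Ropp in *; unfold A in *; lra.
Qed.

Section RiccatiSystem.

Variables (k mu tau : R) (m1 m2 : R -> R) (N : R -> Prop).

Hypothesis k_pos : 0 < k.
Hypothesis mu_neg : mu < 0.
Hypothesis m1_lip : loc_lipschitz_0 m1 tau.
Hypothesis m2_lip : loc_lipschitz_0 m2 tau.
Hypothesis N_null : null_set N.
Hypothesis m_deriv : forall t, 0 < t < tau -> ~ N t ->
  exists d1 d2, derivable_pt_lim m1 t d1 /\ derivable_pt_lim m2 t d2 /\
    d1 <= mu * (m1 t) ^ 2 + k * (m2 t - m1 t) /\
    d2 <= mu * (m2 t) ^ 2 + k * (m2 t - m1 t).

Let r := k / mu.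

Lemma k_eq : k = r * mu.
Proof. unfold r; field; lra. Qed.

Hypothesis sum_init : m1 0 + m2 0 <= 2 * r.
Lemma sum_le_twice_r t : 0 <= t < tau -> m1 t + m2 t <= 2 * r.
Proof.
  intros Ht.
  set (g x := m1 x + m2 x - 2 * r).
  set (w x := exp (- (2 * k) * x)).
  assert (Hgw : g t * w t <= g 0 * w 0).
  { apply (nonincreasing_of_dini (fun x => g x * w x) 0 t N); [lra | exact N_null | |].
    - apply lipschitz_on_mult; [apply lipschitz_on_minus; [apply lipschitz_on_plus|] |].
      + now apply (lipschitz_on_of_loc _ tau).
      + now apply (lipschitz_on_of_loc _ tau).
      + apply lipschitz_on_const.
      + apply lipschitz_on_exp_scal; lra.
    - intros x Hx HNx.
      destruct (m_deriv x ltac:(lra) HNx) as [d1 [d2 [Hd1 [Hd2 [Hb1 Hb2]]]]].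
      rewrite k_eq in Hb1, Hb2.
      pose proof (riccati_sum_deriv_le mu r (m1 x) (m2 x) d1 d2 mu_neg Hb1 Hb2) as Hsum.
      rewrite <- k_eq in Hsum.
      apply (right_dini_nonpos_of_derivable _ x ((d1 + d2 - 0) * w x + g x * (- (2 * k) * w x))).
      + apply derivable_pt_lim_mult; [|apply derivable_pt_lim_exp_scal].
        apply derivable_pt_lim_minus; [apply derivable_pt_lim_plus; assumption|].
        apply derivable_pt_lim_const.
      + assert (0 < w x) by apply exp_pos. unfold g in *. nra. }
  assert (Hw0 : w 0 = 1) by (unfold w; rewrite Rmult_0_r; apply exp_0).
  assert (0 < w t) by apply exp_pos.
  unfold g in Hgw; rewrite Hw0 in Hgw; nra.
Qed.

Lemma m1_deriv_le t : 0 < t < tau -> ~ N t ->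
  exists d, derivable_pt_lim m1 t d /\ d <= mu * (m1 t - r) ^ 2.
Proof.
  intros Ht HNt.
  destruct (m_deriv t Ht HNt) as [d1 [_ [Hd1 [_ [Hb1 _]]]]].
  exists d1; split; [exact Hd1|].
  rewrite k_eq in Hb1.
  apply (riccati_shift_deriv_le mu r (m1 t) (m2 t)); [lra | rewrite <- k_eq; lra | | exact Hb1].
  apply sum_le_twice_r; lra.
Qed.

Lemma m1_le_init t : 0 <= t < tau -> m1 t <= m1 0.
Proof.
  intros Ht.
  apply (nonincreasing_of_dini m1 0 t N); [lra | exact N_null | now apply (lipschitz_on_of_loc _ tau) |].
  intros x Hx HNx.
  destruct (m1_deriv_le x ltac:(lra) HNx) as [d [Hd Hb]].
  apply (right_dini_nonpos_of_derivable _ x d Hd).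
  pose proof (pow2_ge_0 (m1 x - r)); nra.
Qed.

Hypothesis m2_init : 0 <= m2 0.

Let m0 := m1 0 - r.

Lemma m0_neg : m0 < 0.
Proof. pose proof k_eq; unfold m0; nra. Qed.

Lemma riccati_bound t : 0 <= t < tau -> t < 1 / (m0 * mu) ->
  m1 t - r <= m0 / (1 - m0 * mu * t).
Proof.
  intros Ht HT.
  pose proof m0_neg as Hm0.
  assert (Hgap : forall y, 0 <= y <= t -> - m0 <= r - m1 y).
  { intros y Hy; pose proof (m1_le_init y ltac:(lra)); unfold m0; lra. }
  set (p y := 1 / (r - m1 y) - mu * y).
  assert (Hp : p t <= p 0).
  { apply (nonincreasing_of_dini p 0 t N); [lra | exact N_null | |].
    - apply lipschitz_on_minus; apply lipschitz_on_mult; try apply lipschitz_on_const.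
      + apply (lipschitz_on_inv _ _ _ (- m0)); [lra | exact Hgap |].
        apply lipschitz_on_minus; [apply lipschitz_on_const|].
        now apply (lipschitz_on_of_loc _ tau).
      + exists 1; split; [lra|]; intros x y _ _; lra.
    - intros x Hx HNx.
      destruct (m1_deriv_le x ltac:(lra) HNx) as [d [Hd Hb]].
      pose proof (Hgap x ltac:(lra)) as Hx0.
      apply (right_dini_nonpos_of_derivable _ x
               ((0 * (r - m1 x) - (0 - d) * 1) / Rsqr (r - m1 x) - mu * 1)).
      + exact (derivable_pt_lim_minus _ _ x _ _
          (derivable_pt_lim_div (fct_cte 1) (fun y => r - m1 y) x _ _
             (derivable_pt_lim_const 1 x)
             (derivable_pt_lim_minus _ _ x _ _ (derivable_pt_lim_const r x) Hd) ltac:(lra))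
          (derivable_pt_lim_scal id mu x 1 (derivable_pt_lim_id x))).
      + assert (Hz : 0 < Rsqr (r - m1 x)) by (apply Rlt_0_sqr; lra).
        replace (mu * (m1 x - r) ^ 2) with (mu * Rsqr (r - m1 x)) in Hb by (unfold Rsqr; ring).
        replace ((0 * (r - m1 x) - (0 - d) * 1) / Rsqr (r - m1 x) - mu * 1)
          with ((d - mu * Rsqr (r - m1 x)) / Rsqr (r - m1 x)) by (field; lra).
        assert (0 < / Rsqr (r - m1 x)) by (apply Rinv_0_lt_compat; lra).
        unfold Rdiv; nra. }
  assert (HD : 0 < 1 - m0 * mu * t).
  { assert (Ha : 0 < m0 * mu) by nra.
    assert (t * (m0 * mu) < 1) by (replace 1 with (1 / (m0 * mu) * (m0 * mu)) by (field; lra); nra).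
    nra. }
  unfold p in Hp; replace (r - m1 0) with (- m0) in Hp by (unfold m0; ring).
  pose proof (Hgap t ltac:(lra)) as Hu.
  set (u := r - m1 t) in *.
  assert (1 / u * u = 1) by (field; lra).
  assert (1 / - m0 * - m0 = 1) by (field; lra).
  assert (Hmain : - m0 <= (1 - m0 * mu * t) * u).
  { pose proof (Rmult_le_compat_l (u * - m0) _ _ ltac:(nra) Hp) as Hmul.
    replace (u * - m0 * (1 / u - mu * t)) with (- m0 * (1 / u * u) + m0 * mu * t * u) in Hmul by ring.
    replace (u * - m0 * (1 / - m0 - mu * 0)) with (u * (1 / - m0 * - m0)) in Hmul by ring.
    nra. }
  assert (m0 / (1 - m0 * mu * t) * (1 - m0 * mu * t) = m0) by (field; lra).
  replace (m1 t - r) with (- u) by (unfold u; ring).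
  nra.
Qed.

Lemma m1_blowup : 1 / (m0 * mu) <= tau -> forall M, exists delta, 0 < delta /\
  forall t, 1 / (m0 * mu) - delta < t < 1 / (m0 * mu) -> m1 t - r < M.
Proof.
  intros HT M.
  pose proof m0_neg as Hm0.
  assert (HT0 : 0 < 1 / (m0 * mu)) by (apply Rdiv_lt_0_compat; nra).
  destruct (riccati_profile_unbounded m0 (m0 * mu) M Hm0 ltac:(nra)) as [delta [Hdelta Hprofile]].
  exists (Rmin delta (1 / (m0 * mu))); split; [now apply Rmin_pos|].
  intros t Ht. pose proof (Rmin_l delta (1 / (m0 * mu))); pose proof (Rmin_r delta (1 / (m0 * mu))).
  eapply Rle_lt_trans; [apply riccati_bound | apply Hprofile]; lra.
Qed.

Lemma existence_time_le : tau <= 1 / (m0 * mu).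
Proof.
  set (T := 1 / (m0 * mu)).
  assert (HT0 : 0 < T) by (pose proof m0_neg; apply Rdiv_lt_0_compat; nra).
  destruct (Rle_lt_dec tau T) as [|HTtau]; [assumption|exfalso].
  destruct (lipschitz_on_bounded m1 0 T (lipschitz_on_of_loc m1 tau T m1_lip ltac:(lra)))
    as [B [_ Hbound]].
  destruct (m1_blowup ltac:(unfold T in *; lra) (- B - r)) as [delta [Hdelta Hnear]].
  set (t := Rmax (T - delta / 2) (T / 2)).
  assert (T - delta / 2 <= t) by apply Rmax_l.
  assert (T / 2 <= t) by apply Rmax_r.
  assert (t < T) by (apply Rmax_lub_lt; lra).
  pose proof (Hnear t ltac:(unfold T in *; lra)).
  pose proof (Hbound t ltac:(lra)); pose proof (Rle_abs (- m1 t)); rewrite Rabs_Ropp in *; lra.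
Qed.

End RiccatiSystem.

Theorem lemma4p2 (k mu tau : R) (m1 m2 : R -> R) :
  0 < k -> mu < 0 -> 0 < tau ->
  loc_lipschitz_0 m1 tau -> loc_lipschitz_0 m2 tau ->
  (forall t, 0 <= t < tau -> m1 t <= m2 t) ->
  0 <= m2 0 ->
  (exists N : R -> Prop, null_set N /\
     forall t, 0 < t < tau -> ~ N t ->
       exists d1 d2, derivable_pt_lim m1 t d1 /\ derivable_pt_lim m2 t d2 /\
         d1 <= mu * (m1 t)^2 + k * (m2 t - m1 t) /\
         d2 <= mu * (m2 t)^2 + k * (m2 t - m1 t)) ->
  m1 0 <= 2 * k / mu - m2 0 ->
  let m := fun t => m1 t - k / mu in
  m 0 < 0 /\
  (forall t, 0 <= t < tau -> t < 1 / (m 0 * mu) ->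
     m t <= m 0 / (1 - m 0 * mu * t)) /\
  (1 / (m 0 * mu) <= tau ->
     forall M : R, exists delta, 0 < delta /\
       forall t, 1 / (m 0 * mu) - delta < t < 1 / (m 0 * mu) -> m t < M) /\
  tau <= 1 / (m 0 * mu).
Proof.
  intros Hk Hmu _ Hm1 Hm2 _ Hm20 [N [HN Hderiv]] Hinit; cbv beta zeta.
  assert (Hsum : m1 0 + m2 0 <= 2 * (k / mu))
    by (replace (2 * (k / mu)) with (2 * k / mu) by (field; lra); lra).
  split; [|split; [|split]].
  - exact (m0_neg k mu m1 m2 Hk Hmu Hsum Hm20).
  - exact (riccati_bound k mu tau m1 m2 N Hk Hmu Hm1 Hm2 HN Hderiv Hsum Hm20).
  - exact (m1_blowup k mu tau m1 m2 N Hk Hmu Hm1 Hm2 HN Hderiv Hsum Hm20).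
  - exact (existence_time_le k mu tau m1 m2 N Hk Hmu Hm1 Hm2 HN Hderiv Hsum Hm20).
Qed.
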